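(* Let $(M_1,f_1,g_1)$ and $(M_2,f_2,g_2)$ be $(m,n)$-hypermodules over a commutative Krasner $(m,n)$-hyperring $(R,f',g')$ with scalar identity $1$, let $Q_1$ and $Q_2$ be $n$-ary weakly classical prime subhypermodules of $M_1$ and $M_2$ respectively, and let $h:M_1\to M_2$ be a homomorphism. Then: (1) if $h$ is an epimorphism and $\mathrm{Ker}(h)\subseteq Q_1$, then $h(Q_1)$ is an $n$-ary weakly classical prime subhypermodule of $M_2$; (2) if $h$ is a monomorphism with $h^{-1}(Q_2)\neq M_1$, then $h^{-1}(Q_2)$ is an $n$-ary weakly classical prime subhypermodule of $M_1$.
   Context: A commutative Krasner $(m,n)$-hyperring with scalar identity $1$ is a triple $(R,f',g')$ where $(R,f')$ is a canonical $m$-ary hypergroup with zero $0$, $(R,g')$ is a commutative $n$-ary semigroup, $g'$ is distributive over $f'$, $0$ is a zero element for $g'$, and $g'(x,1^{(n-1)})=x$. Notation: $x_i^j$ denotes $x_i,\dots,x_j$ and $x^{(k)}$ denotes $x$ repeated $k$ times. An $(m,n)$-hypermodule over $R$ is a triple $(M,f,g)$ with $(M,f)$ a canonical $m$-ary hypergroup with zero $0$ and $g:R^{n-1}\times M\to P^*(M)$ satisfying: $g(r_1^{n-1},f(x_1^m))=f(g(r_1^{n-1},x_1),\dots,g(r_1^{n-1},x_m))$; $g(r_1^{i-1},f'(s_1^m),r_{i+1}^{n-1},x)=f(g(r_1^{i-1},s_1,r_{i+1}^{n-1},x),\dots,g(r_1^{i-1},s_m,r_{i+1}^{n-1},x))$;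 $g(r_1^{i-1},g'(r_i^{i+n-1}),r_{i+n}^{2n-2},x)=g(r_1^{n-1},g(r_n^{2n-2},x))$; $g(r_1^{i-1},0,r_{i+1}^{n-1},x)=\{0\}$; moreover $g(1^{(n-1)},a)=\{a\}$. A subhypermodule is a nonempty subset $N$ with $(N,f)$ an $m$-ary subhypergroup and $g(R^{(n-1)},N)\subseteq N$. A proper subhypermodule $Q$ of $M$ is $n$-ary weakly classical prime if for $r_1^{n-1}\in R$, $a\in M$, $0\notin g(r_1^{n-1},a)\subseteq Q$ implies $g(r_i,1^{(n-2)},a)\subseteq Q$ for some $1\le i\le n-1$. A homomorphism $h:M_1\to M_2$ is a map with $h(f_1(a_1^m))=f_2(h(a_1),\dots,h(a_m))$ and $h(g_1(r_1^{n-1},a))=g_2(r_1^{n-1},h(a))$ for all $a_1^m,a\in M_1$, $r_1^{n-1}\in R$; $\mathrm{Ker}(h)=\{a\in M_1:h(a)=0\}$; epimorphism means surjective, monomorphism injective. *)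

(* Lists x_1^{2k-1} are encoded by
   functions nat -> T (0-indexed). *)
From mathcomp Require Import all_boot all_fingroup.
Set Implicit Arguments. Unset Strict Implicit. Unset Printing Implicit Defensive.

Definition hset (T : Type) := T -> Prop.
Definition single {T : Type} (x : T) : hset T := fun y => y = x.
Definition set_eq {T : Type} (A B : hset T) : Prop := forall z, A z <-> B z.

Definition ext {T : Type} {k : nat} (F : ('I_k -> T) -> hset T)
  (A : 'I_k -> hset T) : hset T :=
  fun z => exists y : 'I_k -> T, (forall j, A j (y j)) /\ F y z.

Definition upd {T : Type} {k : nat} (x : 'I_k -> T) (i : 'I_k) (v : T) : 'I_k -> T :=
  fun j => if j == i then v else x j.

Definition win {T : Type} {k : nat} (x : nat -> T) (s : nat) : 'I_k -> T :=
  fun j => x (s + j).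

Definition canonical_hypergroup (m : nat) (T : Type)
  (f : ('I_m -> T) -> hset T) (e : T) : Prop :=
  (forall x, exists z, f x z) /\
  (* associativity: f(x_1^{i-1}, f(x_i^{i+m-1}), x_{i+m}^{2m-1}) = f(x_1^{m-1}, f(x_m^{2m-1})) *)
  (forall (x : nat -> T) (i : 'I_m),
     set_eq
       (ext f (fun j : 'I_m => if j < i then single (x j)
                               else if j == i then f (win x i)
                               else single (x (j + m - 1))))
       (ext f (fun j : 'I_m => if j < m - 1 then single (x j)
                               else f (win x (m - 1))))) /\
  (forall (a : 'I_m -> T) (i : 'I_m) (z : T), exists y, f (upd a i y) z) /\
  (forall (s : {perm 'I_m}) (x : 'I_m -> T), set_eq (f (fun j => x (s j))) (f x)) /\
  (forall x, set_eq (f (fun j : 'I_m => if val j == 0 then x else e)) (single x)) /\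
  (forall e' : T,
     (forall x, set_eq (f (fun j : 'I_m => if val j == 0 then x else e')) (single x)) ->
     e' = e) /\
  (exists inv : T -> T,
     (forall x, f (fun j : 'I_m => if val j == 0 then x
                                  else if val j == 1 then inv x else e) e) /\
     (forall x y, f (fun j : 'I_m => if val j == 0 then x
                                    else if val j == 1 then y else e) e -> y = inv x) /\
     (* x in f(x_1^m) implies
        x_i in f(-x_{i-1},...,-x_1, x, -x_m,...,-x_{i+1})  (0-indexed below) *)
     (forall (x : T) (xs : 'I_m -> T), f xs x ->
        forall i : 'I_m,
          f (fun p : 'I_m =>
               if p < i then inv (xs (insubd i (i - 1 - p)))
               else if p == i then x
               else inv (xs (insubd i (m + i - p)))) (xs i))).

Definition krasner_hyperring (m n : nat) (R : Type)
  (f' : ('I_m -> R) -> hset R) (g' : ('I_n -> R) -> R) (zero one : R) : Prop :=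
  canonical_hypergroup f' zero /\
  (forall (x : nat -> R) (i : 'I_n),
     g' (fun j : 'I_n => if j < i then x j
                         else if j == i then g' (win x i)
                         else x (j + n - 1))
     = g' (fun j : 'I_n => if j < n - 1 then x j else g' (win x (n - 1)))) /\
  (forall (s : {perm 'I_n}) (x : 'I_n -> R), g' (fun j => x (s j)) = g' x) /\
  (forall (x : 'I_n -> R) (i : 'I_n) (y : 'I_m -> R),
     set_eq (fun z => exists t, f' y t /\ z = g' (upd x i t))
            (f' (fun j => g' (upd x i (y j))))) /\
  (forall (x : 'I_n -> R) (i : 'I_n), g' (upd x i zero) = zero) /\
  (forall x : R, g' (fun j : 'I_n => if val j == 0 then x else one) = x).

Definition hypermodule (m n : nat) (R : Type)
  (f' : ('I_m -> R) -> hset R) (g' : ('I_n -> R) -> R) (zeroR one : R)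
  (M : Type) (f : ('I_m -> M) -> hset M) (g : ('I_n.-1 -> R) -> M -> hset M)
  (zeroM : M) : Prop :=
  canonical_hypergroup f zeroM /\
  (forall r x, exists z, g r x z) /\
  (forall (r : 'I_n.-1 -> R) (x : 'I_m -> M),
     set_eq (fun z => exists t, f x t /\ g r t z) (ext f (fun j => g r (x j)))) /\
  (forall (r : 'I_n.-1 -> R) (i : 'I_n.-1) (s : 'I_m -> R) (x : M),
     set_eq (fun z => exists t, f' s t /\ g (upd r i t) x z)
            (ext f (fun j => g (upd r i (s j)) x))) /\
  (* g(r_1^{i-1}, g'(r_i^{i+n-1}), r_{i+n}^{2n-2}, x) = g(r_1^{n-1}, g(r_n^{2n-2}, x)) *)
  (forall (r : nat -> R) (i : 'I_n.-1) (x : M),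
     set_eq (g (fun j : 'I_n.-1 => if j < i then r j
                                  else if j == i then g' (win r i)
                                  else r (j + n - 1)) x)
            (fun z => exists y, g (win r (n - 1)) x y /\ g (win r 0) y z)) /\
  (forall (r : 'I_n.-1 -> R) (i : 'I_n.-1) (x : M),
     set_eq (g (upd r i zeroR) x) (single zeroM)) /\
  (forall a : M, set_eq (g (fun _ => one) a) (single a)).

Definition subhypermodule (m n : nat) (R : Type) (M : Type)
  (f : ('I_m -> M) -> hset M) (g : ('I_n.-1 -> R) -> M -> hset M)
  (N : hset M) : Prop :=
  (exists x, N x) /\
  (forall (x : 'I_m -> M), (forall j, N (x j)) -> forall z, f x z -> N z) /\
  (forall (a : 'I_m -> M) (i : 'I_m) (z : M), (forall j, N (a j)) -> N z ->
     exists y, N y /\ f (upd a i y) z) /\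
  (forall (r : 'I_n.-1 -> R) (x : M), N x -> forall z, g r x z -> N z).

Definition weakly_classical_prime (m n : nat) (R : Type) (one : R) (M : Type)
  (f : ('I_m -> M) -> hset M) (g : ('I_n.-1 -> R) -> M -> hset M)
  (zeroM : M) (Q : hset M) : Prop :=
  subhypermodule f g Q /\
  (exists x, ~ Q x) /\
  (forall (r : 'I_n.-1 -> R) (a : M),
     ~ g r a zeroM -> (forall z, g r a z -> Q z) ->
     exists i : 'I_n.-1,
       forall z, g (fun j : 'I_n.-1 => if val j == 0 then r i else one) a z -> Q z).

Definition himage {A B : Type} (h : A -> B) (S : hset A) : hset B :=
  fun y => exists x, S x /\ h x = y.

Definition hyper_hom (m n : nat) (R : Type) (M1 M2 : Type)
  (f1 : ('I_m -> M1) -> hset M1) (g1 : ('I_n.-1 -> R) -> M1 -> hset M1)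
  (f2 : ('I_m -> M2) -> hset M2) (g2 : ('I_n.-1 -> R) -> M2 -> hset M2)
  (h : M1 -> M2) : Prop :=
  (forall a : 'I_m -> M1, set_eq (himage h (f1 a)) (f2 (fun j => h (a j)))) /\
  (forall (r : 'I_n.-1 -> R) (a : M1), set_eq (himage h (g1 r a)) (g2 r (h a))).

From mathcomp Require Import all_boot all_fingroup.
From mathcomp Require Import zify.
From Stdlib Require Import FunctionalExtensionality ClassicalEpsilon Classical.

Set Implicit Arguments.
Unset Strict Implicit.
Unset Printing Implicit Defensive.

(* Both parts rest on a cancellation property of subhypergroups N of a
   canonical m-ary hypergroup: if z is in f(w_1, ..., w_m) and z and all w_k
   with k <> i lie in N, then so does w_i, because reversibility puts w_i in
   f applied to z and the inverses of the other w_k, and N is closed under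
   inverses. With the reproducibility of M_1, cancellation shows that
   h x in h(Q_1) forces x in Q_1 once Ker(h) is inside Q_1 (compare
   f_1(q, y, 0, ...) containing 0 with f_1(x, y, 0, ...)), and that the
   preimage h^-1(Q_2) is reproductive. The primeness condition then
   transfers along h, which commutes with g and maps 0 to 0; injectivity is
   what reflects 0 notin g_2(r, h a) back to M_1. *)

Section CanonicalHypergroup.

Variables (m : nat) (T : Type) (f : ('I_m -> T) -> hset T) (e : T).
Hypotheses (Hm : 1 < m) (Hf : canonical_hypergroup f e).

Variable N : hset T.
Hypothesis N_closed : forall x : 'I_m -> T, (forall j, N (x j)) -> forall z, f x z -> N z.
Hypothesis N_reprod : forall (a : 'I_m -> T) (i : 'I_m) (z : T),
  (forall j, N (a j)) -> N z -> exists y, N y /\ f (upd a i y) z.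
Hypothesis N_e : N e.

Lemma subhypergroup_cancel (w : 'I_m -> T) (z : T) (i : 'I_m) :
  f w z -> (forall k, k != i -> N (w k)) -> N z -> N (w i).
Proof.
case: Hf => _ [_ [_ [_ [_ [_ [inv [_ [inv_uniq inv_rev]]]]]]]].
have N_inv x : N x -> N (inv x).
  move=> Nx; pose a (j : 'I_m) := if val j == 0 then x else e.
  have Na j : N (a j) by rewrite /a; case: ifP.
  have [y [Ny fy]] := @N_reprod a (Ordinal Hm) e Na N_e.
  rewrite -(inv_uniq x y) //; congr (f _ e): fy.
  by apply: functional_extensionality => -[[|[|j]] ?].
(* The entries other than z sit at positions i - 1 - p and m + i - p of w,
   which are in range and differ from i. *)
move=> fw Nw Nz; apply: (@N_closed _ _ _ (inv_rev _ _ fw i)) => p.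
have lt_im := ltn_ord i; have lt_pm := ltn_ord p.
case: ltnP => [lt_pi | le_ip]; last case: eqVneq => [// | ne_pi].
- apply/N_inv/Nw; rewrite -val_eqE val_insubd ifT /=; lia.
- have lt_ip : i < p by rewrite ltn_neqAle le_ip andbT eq_sym val_eqE.
  apply/N_inv/Nw; rewrite -val_eqE val_insubd ifT /=; lia.
Qed.

End CanonicalHypergroup.

Section Hypermodule.

Variables (m n : nat) (R : Type) (f' : ('I_m -> R) -> hset R) (g' : ('I_n -> R) -> R).
Variables (zeroR one : R) (M : Type) (f : ('I_m -> M) -> hset M).
Variables (g : ('I_n.-1 -> R) -> M -> hset M) (zeroM : M).
Hypotheses (Hm : 1 < m) (Hn : 1 < n) (HM : hypermodule f' g' zeroR one f g zeroM).

Lemma hypermodule_scale0 x : set_eq (g (fun _ => zeroR) x) (single zeroM).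
Proof.
have i : 'I_n.-1 by exists 0; rewrite -subn1 subn_gt0.
case: HM => _ [_ [_ [_ [_ [scale0 _]]]]].
have := scale0 (fun _ => zeroR) i x; congr (set_eq (g _ x) _).
by apply: functional_extensionality => j; rewrite /upd; case: ifP.
Qed.

Lemma subhypermodule_zero N : subhypermodule f g N -> N zeroM.
Proof.
by case=> -[x Nx] [_ [_ N_scale]]; apply: (N_scale _ x Nx); apply/hypermodule_scale0.
Qed.

Lemma subhypermodule_cancel N (w : 'I_m -> M) (z : M) (i : 'I_m) :
  subhypermodule f g N ->
  f w z -> (forall k, k != i -> N (w k)) -> N z -> N (w i).
Proof.
move=> sN; have N0 := subhypermodule_zero sN.
case: sN => _ [N_closed [N_reprod _]].
exact: (subhypergroup_cancel Hm HM.1 N_closed N_reprod N0).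
Qed.

End Hypermodule.

Lemma map_upd (A B : Type) (k : nat) (h : A -> B) (a : 'I_k -> A) (i : 'I_k) (y : A) :
  (fun j => h (upd a i y j)) = upd (fun j => h (a j)) i (h y).
Proof. by apply: functional_extensionality => j; rewrite /upd; case: ifP. Qed.

Lemma himage_lift (A B : Type) (k : nat) (h : A -> B) (N : hset A) (x : 'I_k -> B) :
  (forall j, himage h N (x j)) ->
  exists x' : 'I_k -> A, (forall j, N (x' j)) /\ (fun j => h (x' j)) = x.
Proof.
move=> /choice[x' Hx']; exists x'; split; first by move=> j; case: (Hx' j).
by apply: functional_extensionality => j; case: (Hx' j).
Qed.

Section Homomorphism.

Variables (m n : nat) (R : Type) (f' : ('I_m -> R) -> hset R) (g' : ('I_n -> R) -> R).
Variables (zeroR one : R).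
Variables (M1 : Type) (f1 : ('I_m -> M1) -> hset M1).
Variables (g1 : ('I_n.-1 -> R) -> M1 -> hset M1) (z1 : M1).
Variables (M2 : Type) (f2 : ('I_m -> M2) -> hset M2).
Variables (g2 : ('I_n.-1 -> R) -> M2 -> hset M2) (z2 : M2).
Hypotheses (Hm : 1 < m) (Hn : 1 < n).
Hypothesis HM1 : hypermodule f' g' zeroR one f1 g1 z1.
Hypothesis HM2 : hypermodule f' g' zeroR one f2 g2 z2.
Variable h : M1 -> M2.
Hypothesis Hh : hyper_hom f1 g1 f2 g2 h.

Lemma hyper_hom_zero : h z1 = z2.
Proof.
have [x [g1x <-]] := (Hh.2 _ z1 z2).2 ((hypermodule_scale0 Hn HM2 (h z1) z2).2 erefl).
by rewrite ((hypermodule_scale0 Hn HM1 z1 x).1 g1x).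
Qed.

Lemma subhypermodule_himage N : subhypermodule f1 g1 N -> subhypermodule f2 g2 (himage h N).
Proof.
case=> -[x0 Nx0] [N_closed [N_reprod N_scale]].
split; first by exists (h x0), x0.
split; [|split].
- move=> _ /himage_lift[x [Nx <-]] z /(Hh.1 _ _).2[z' [fz' <-]].
  by exists z'; split => //; apply: N_closed fz'.
- move=> _ i _ /himage_lift[a [Na <-]] [z [Nz <-]].
  have [y [Ny fy]] := N_reprod a i z Na Nz.
  exists (h y); split; first by exists y.
  by rewrite -map_upd; apply/(Hh.1 _ _).1; exists z.
- move=> r _ [x [Nx <-]] z /(Hh.2 _ _ _).2[z' [gz' <-]].
  by exists z'; split => //; apply: N_scale gz'.
Qed.

Lemma subhypermodule_preimage N :
  subhypermodule f2 g2 N -> subhypermodule f1 g1 (fun x => N (h x)).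
Proof.
move=> sN; have N0 := subhypermodule_zero Hn HM2 sN.
case: (sN) => _ [N_closed [_ N_scale]].
split; first by exists z1; rewrite hyper_hom_zero.
split; [|split].
- move=> x Nx z fz; apply: (N_closed (fun j => h (x j))) => //.
  by apply/(Hh.1 _ _).1; exists z.
- move=> a i z Na Nz.
  have [_ [_ [f1_reprod _]]] := HM1.1.
  have [y fy] := f1_reprod a i z.
  exists y; split => //.
  have fy2 : f2 (fun j => h (upd a i y j)) (h z) by apply/(Hh.1 _ _).1; exists z.
  have := subhypermodule_cancel Hm Hn HM2 sN fy2 (i := i) _ Nz.
  by rewrite /upd eqxx; apply=> k /negbTE ->.
- move=> r x Nx z gz; apply: (N_scale r (h x)) => //.
  by apply/(Hh.2 _ _ _).1; exists z.
Qed.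

Lemma himage_ker N : subhypermodule f1 g1 N -> (forall a, h a = z2 -> N a) ->
  forall x, himage h N (h x) -> N x.
Proof.
move=> sN N_ker x [q [Nq hq]].
have N0 := subhypermodule_zero Hn HM1 sN.
pose i0 : 'I_m := Ordinal (ltnW Hm); pose i1 : 'I_m := Ordinal Hm.
pose a u := upd (upd (fun _ => z1) i0 u) i1.
have [_ [_ [f1_reprod _]]] := HM1.1.
have [y fy] := f1_reprod (upd (fun _ => z1) i0 q) i1 z1.
have Ny : N y.
  have := subhypermodule_cancel Hm Hn HM1 sN fy (i := i1) _ N0.
  rewrite /upd eqxx; apply=> k /negbTE ->; by case: ifP.
have f2y : f2 (fun j => h (a x y j)) z2.
  rewrite /a map_upd map_upd -hq -!map_upd -hyper_hom_zero.
  by apply/(Hh.1 _ _).1; exists z1.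
have [t [ft /N_ker Nt]] := (Hh.1 _ _).2 f2y.
have := subhypermodule_cancel Hm Hn HM1 sN ft (i := i0) _ Nt.
rewrite /a /upd eqxx; apply=> k /negbTE ->; by case: ifP.
Qed.

Lemma weakly_classical_prime_himage Q :
  weakly_classical_prime one f1 g1 z1 Q ->
  (forall y, exists x, h x = y) -> (forall a, h a = z2 -> Q a) ->
  weakly_classical_prime one f2 g2 z2 (himage h Q).
Proof.
case=> sQ [[x Qx] Q_prime] h_onto Q_ker.
have Q_back := himage_ker sQ Q_ker.
split; first exact: subhypermodule_himage.
split; first by exists (h x) => /Q_back.
move=> r y; have [a <-] := h_onto y; move=> not_g0 gQ.
have [|z gz|i Qi] := Q_prime r a.
- move=> g0; apply: not_g0; rewrite -hyper_hom_zero.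
  by apply/(Hh.2 _ _ _).1; exists z1.
- by apply/Q_back/gQ; apply/(Hh.2 _ _ _).1; exists z.
- exists i => z /(Hh.2 _ _ _).2[z' [gz' <-]].
  by exists z'; split => //; apply: Qi.
Qed.

Lemma weakly_classical_prime_preimage Q :
  weakly_classical_prime one f2 g2 z2 Q ->
  injective h -> ~ (forall x, Q (h x)) ->
  weakly_classical_prime one f1 g1 z1 (fun x => Q (h x)).
Proof.
case=> sQ [_ Q_prime] h_inj not_all.
split; first exact: subhypermodule_preimage.
split; first exact: not_all_ex_not.
move=> r a not_g0 gQ.
have [|z /(Hh.2 _ _ _).2[z' [gz' <-]]|i Qi] := Q_prime r (h a).
- case/(Hh.2 _ _ _).2 => z [gz hz]; apply: not_g0.
  by rewrite -hyper_hom_zero in hz; rewrite -(h_inj _ _ hz).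
- exact: gQ.
- by exists i => z gz; apply: Qi; apply/(Hh.2 _ _ _).1; exists z.
Qed.

End Homomorphism.

Theorem mainTheorem6 (m n : nat) (Hm : 2 <= m) (Hn : 2 <= n)
  (R : Type) (f' : ('I_m -> R) -> hset R) (g' : ('I_n -> R) -> R) (zeroR one : R)
  (HR : krasner_hyperring f' g' zeroR one)
  (M1 : Type) (f1 : ('I_m -> M1) -> hset M1) (g1 : ('I_n.-1 -> R) -> M1 -> hset M1)
  (z1 : M1) (HM1 : hypermodule f' g' zeroR one f1 g1 z1)
  (M2 : Type) (f2 : ('I_m -> M2) -> hset M2) (g2 : ('I_n.-1 -> R) -> M2 -> hset M2)
  (z2 : M2) (HM2 : hypermodule f' g' zeroR one f2 g2 z2)
  (Q1 : hset M1) (Q2 : hset M2)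
  (HQ1 : weakly_classical_prime one f1 g1 z1 Q1)
  (HQ2 : weakly_classical_prime one f2 g2 z2 Q2)
  (h : M1 -> M2) (Hh : hyper_hom f1 g1 f2 g2 h) :
  ((forall y : M2, exists x : M1, h x = y) ->
   (forall a : M1, h a = z2 -> Q1 a) ->
   weakly_classical_prime one f2 g2 z2 (himage h Q1)) /\
  (injective h ->
   ~ (forall x : M1, Q2 (h x)) ->
   weakly_classical_prime one f1 g1 z1 (fun x => Q2 (h x))).
Proof.
split.
- exact: (weakly_classical_prime_himage Hm Hn HM1 HM2 Hh HQ1).
- exact: (weakly_classical_prime_preimage Hm Hn HM1 HM2 Hh HQ2).
Qed.
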